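(* Let $\mathbf{P}$ be the convex hull of $\{\chi_\mu : \mu \text{ is a non-uniformly stable matching in } G\}$ and let $\mathbf{S}$ be the set of vectors $x\in\mathbb{R}_+^E$ satisfying (1) $x(E(v))\le 1$ for all $v\in V$; (2) $x(e)+\sum_{v\in e}x(E[\succ_v e])\ge 1$ for all $e\in E_1$; (3) $x(E[\sim_v e])+\sum_{w\in e}x(E[\succ_w e])\ge 1$ for all $e\in E_2$ and all $v\in e$. Then $\mathbf{P}=\mathbf{S}$.
   Context: Setting: $G=(V,E)$ is a finite simple bipartite graph with $V=V_1\sqcup V_2$, every edge joining a vertex of $V_1$ to a vertex of $V_2$; an edge is identified with the set of its two endpoints. $E$ is partitioned into $E_1,E_2$ ($E_1\cap E_2=\emptyset$, $E_1\cup E_2=E$). For $F\subseteq E$ and $v\in V$, $F(v)$ is the set of edges of $F$ incident to $v$. For every $v\in V$ there is a transitive and complete binary relation $\succsim_v$ on $E(v)\cup\{\emptyset\}$ with $e\succsim_v\emptyset$ and $\emptyset\not\succsim_v e$ for all $e\in E(v)$; $e\succ_v f$ means $e\succsim_v f$ and $f\not\succsim_v e$; $e\sim_v f$ means both $e\succsim_v f$ and $f\succsim_v e$. A matching is $\mu\subseteq E$ with $|\mu(v)|\le1$ for all $v$; $\mu(v)$ denotes the unique edge of $\mu$ at $v$, or $\emptyset$ if none. An edge $e\in E\setminus\mu$ weakly blocks $\mu$ if $e\succsim_v\mu(v)$ for every $v\in e$; it strongly blocks $\mu$ if additionally $e\succ_w\mu(w)$ for some $w\in e$. A matching $\mu$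 is non-uniformly stable if no edge of $E_1\setminus\mu$ weakly blocks $\mu$ and no edge of $E_2\setminus\mu$ strongly blocks $\mu$. For $x\in\mathbb{R}_+^E$ and $F\subseteq E$, $x(F)=\sum_{e\in F}x(e)$; $\chi_F\in\{0,1\}^E$ is the characteristic vector of $F$. For $v\in V$ and $e\in E(v)$: $E[\succ_v e]=\{f\in E(v): f\succ_v e\}$ and $E[\sim_v e]=\{f\in E(v): f\sim_v e\}$. *)

From mathcomp Require Import all_boot all_order all_algebra.
Set Implicit Arguments. Unset Strict Implicit. Unset Printing Implicit Defensive.
Import Order.TTheory GRing.Theory Num.Theory.
Local Open Scope ring_scope.

(* A finite simple bipartite graph: vertices V, side : V -> bool
   (V1 = side false, V2 = side true); each edge e joins src e (in V1) to
   dst e (in V2); distinct edges have distinct endpoint pairs (simple). *)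
Definition bipartite_simple (V E : finType) (side : V -> bool)
  (src dst : E -> V) : Prop :=
  (forall e, side (src e) = false) /\ (forall e, side (dst e) = true) /\
  injective (fun e => (src e, dst e)).

Definition incident (V E : finType) (src dst : E -> V) (e : E) (v : V) : bool :=
  (v == src e) || (v == dst e).

(* domain E(v) \cup {emptyset}: None stands for emptyset *)
Definition in_dom (V E : finType) (src dst : E -> V) (v : V) (a : option E) : bool :=
  if a is Some e then incident src dst e v else true.

Definition pref_ok (V E : finType) (src dst : E -> V)
  (pref : V -> option E -> option E -> bool) : Prop :=
  forall v,
    (forall a b, in_dom src dst v a -> in_dom src dst v b ->
       pref v a b || pref v b a) /\
    (forall a b c, in_dom src dst v a -> in_dom src dst v b -> in_dom src dst v c ->
       pref v a b -> pref v b c -> pref v a c) /\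
    (forall e, incident src dst e v -> pref v (Some e) None /\ ~~ pref v None (Some e)).

Definition spref (V E : finType) (pref : V -> option E -> option E -> bool)
  (v : V) (a b : option E) : bool := pref v a b && ~~ pref v b a.

Definition ipref (V E : finType) (pref : V -> option E -> option E -> bool)
  (v : V) (a b : option E) : bool := pref v a b && pref v b a.

Definition is_matching (V E : finType) (src dst : E -> V) (mu : {set E}) : Prop :=
  forall v, (#|[set e in mu | incident src dst e v]| <= 1)%N.

(* mu(v): the edge of mu at v, or None (emptyset) *)
Definition medge (V E : finType) (src dst : E -> V) (mu : {set E}) (v : V)
  : option E := [pick e in mu | incident src dst e v].

Definition weakly_blocks (V E : finType) (src dst : E -> V)
  (pref : V -> option E -> option E -> bool) (mu : {set E}) (e : E) : Prop :=
  e \notin mu /\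
  forall v, incident src dst e v -> pref v (Some e) (medge src dst mu v).

Definition strongly_blocks (V E : finType) (src dst : E -> V)
  (pref : V -> option E -> option E -> bool) (mu : {set E}) (e : E) : Prop :=
  weakly_blocks src dst pref mu e /\
  exists w, incident src dst e w /\ spref pref w (Some e) (medge src dst mu w).

(* E2 = ~: E1 *)
Definition nu_stable (V E : finType) (src dst : E -> V)
  (pref : V -> option E -> option E -> bool) (E1 : {set E}) (mu : {set E}) : Prop :=
  is_matching src dst mu /\
  (forall e, e \in E1 -> ~ weakly_blocks src dst pref mu e) /\
  (forall e, e \notin E1 -> ~ strongly_blocks src dst pref mu e).

Definition chi (R : realFieldType) (E : finType) (F : {set E}) (e : E) : R :=
  if e \in F then 1 else 0.

Definition in_conv_hull (R : realFieldType) (I E : finType) (P : I -> Prop)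
  (f : I -> E -> R) (x : E -> R) : Prop :=
  exists lam : I -> R,
    (forall i, 0 <= lam i) /\ (forall i, ~ P i -> lam i = 0) /\
    \sum_i lam i = 1 /\
    forall e, x e = \sum_i lam i * f i e.

Definition in_S (R : realFieldType) (V E : finType) (src dst : E -> V)
  (pref : V -> option E -> option E -> bool) (E1 : {set E}) (x : E -> R) : Prop :=
  (forall e, 0 <= x e) /\
  (forall v, \sum_(f | incident src dst f v) x f <= 1) /\
  (forall e, e \in E1 ->
     x e + \sum_(v | incident src dst e v)
             \sum_(f | incident src dst f v && spref pref v (Some f) (Some e)) x f
     >= 1) /\
  (forall e v, e \notin E1 -> incident src dst e v ->
     \sum_(f | incident src dst f v && ipref pref v (Some f) (Some e)) x f
     + \sum_(w | incident src dst e w)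
         \sum_(f | incident src dst f w && spref pref w (Some f) (Some e)) x f
     >= 1).

From mathcomp Require Import all_boot all_order all_algebra.
From Stdlib Require Import Classical FunctionalExtensionality.
From mathcomp Require Import ring lra.
Set Implicit Arguments. Unset Strict Implicit. Unset Printing Implicit Defensive.
Import Order.TTheory GRing.Theory Num.Theory.
Local Open Scope ring_scope.

(* A stable matching satisfies (1)-(3), so P is contained in S.
   Conversely, let x be in S.  Summing, over the edges e, x(e) times the mean of
   the constraints of e gives half the sum of the squared vertex loads; hence
   every load is 0 or 1 and all constraints of edges in the support are tight.
   Let H be the support edges that are top-ranked at their V1-endpoint;
   tightness makes them bottom-ranked at their V2-endpoint, and every loaded
   vertex meets H.  If some e in H carries less than its whole tie class, these
   slack edges form a subgraph of minimum degree two, which supports a nonzero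
   vector with zero vertex sums; moving x along it both ways stays in S and
   shrinks the support.  Otherwise H is a non-uniformly stable matching and
   x = eps chi_H + (1 - eps) x' with eps the least weight on H and x' in S of
   smaller support.  Induction on the support concludes. *)

Lemma exists_minimal (T : finType) (P : pred T) (lt : rel T) :
  (forall a, ~~ lt a a) ->
  (forall a b c, P a -> P b -> P c -> lt a b -> lt b c -> lt a c) ->
  forall a0, P a0 -> exists2 a, P a & forall b, P b -> ~~ lt b a.
Proof.
move=> irr tr a0 Pa0.
case: (arg_minnP (fun a => #|[set b | P b && lt b a]|) Pa0) => a Pa amin.
exists a => // b Pb; apply/negP => lt_ba.
suff : (#|[set c | P c && lt c b]| < #|[set c | P c && lt c a]|)%N.
  by rewrite ltnNge amin.
apply: proper_card; apply/properP; split.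
  by apply/subsetP => c; rewrite !inE => /andP[Pc lt_cb]; rewrite Pc (tr _ _ _ Pc Pb Pa).
by exists b; rewrite !inE ?Pb ?lt_ba ?irr.
Qed.

Lemma left_kernel_nonzero (K : fieldType) (m n : nat) (A : 'M[K]_(m, n)) :
  (n < m)%N -> exists2 r : 'rV[K]_m, r != 0 & r *m A = 0.
Proof.
move=> lt_nm; have /rowV0Pn[r /sub_kermxP rA r0] : kermx A != 0.
  by rewrite kermx_eq0 /row_free neq_ltn (leq_ltn_trans (rank_leq_col A) lt_nm).
by exists r.
Qed.

Lemma sumr_eq0_neg (R : realDomainType) (T : finType) (d : T -> R) :
  \sum_i d i = 0 -> (exists i, d i != 0) -> exists i, d i < 0.
Proof.
move=> sum0 [i di0]; apply: NNPP => no_neg.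
have d_ge0 j : 0 <= d j by rewrite leNgt; apply/negP => dj; apply: no_neg; exists j.
by move: di0; rewrite (psumr_eq0P (fun j _ => d_ge0 j) sum0) ?eqxx.
Qed.

Section NonnegSums.
Variables (R : realDomainType) (T : finType) (x : T -> R).
Hypothesis x_ge0 : forall t, 0 <= x t.

Lemma le_sum (P : pred T) t : P t -> x t <= \sum_(i | P i) x i.
Proof. by move=> Pt; rewrite (bigD1 t) //= lerDl sumr_ge0. Qed.

Lemma psum_eq0 (P : pred T) : (forall t, P t -> 0 < x t -> False) ->
  \sum_(i | P i) x i = 0.
Proof.
move=> nopos; apply: big1 => t Pt; apply/eqP; rewrite eq_le x_ge0 andbT leNgt.
by apply/negP => /(nopos t Pt).
Qed.

Lemma psum_eq0_pos (P : pred T) t : \sum_(i | P i) x i = 0 -> P t -> 0 < x t -> False.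
Proof. by move=> s0 Pt; rewrite (psumr_eq0P (fun i _ => x_ge0 i) s0 Pt) ltxx. Qed.

End NonnegSums.

Lemma sum_mulr_exchange (R : comPzSemiRingType) (I J : finType) (P : pred J)
    (lam : I -> R) (g : I -> J -> R) :
  \sum_(j | P j) \sum_i lam i * g i j = \sum_i lam i * \sum_(j | P j) g i j.
Proof. by rewrite exchange_big; apply: eq_bigr => i _; rewrite mulr_sumr. Qed.

Section ConvexHull.
Variables (R : realFieldType) (I E : finType) (P : I -> Prop) (pt : I -> E -> R).

Lemma in_conv_hull_pt i : P i -> in_conv_hull P pt (pt i).
Proof.
move=> Pi; exists (fun j => if j == i then 1 else 0); split; [|split; [|split]].
- by move=> j; case: ifP.
- by move=> j Pj; case: eqP => // ji; case: Pj; rewrite ji.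
- by rewrite (bigD1 i) //= eqxx big1 ?addr0 // => j /negbTE ->.
- move=> e; rewrite (bigD1 i) //= eqxx mul1r big1 ?addr0 // => j /negbTE ->.
  by rewrite mul0r.
Qed.

Lemma in_conv_hull_comb (t : R) (y z x : E -> R) : 0 <= t <= 1 ->
  in_conv_hull P pt y -> in_conv_hull P pt z ->
  (forall e, x e = t * y e + (1 - t) * z e) -> in_conv_hull P pt x.
Proof.
move=> /andP[t0 t1] [ly [ly0 [lyP [ly1 hy]]]] [lz [lz0 [lzP [lz1 hz]]]] hx.
exists (fun i => t * ly i + (1 - t) * lz i); split; [|split; [|split]].
- by move=> i; rewrite addr_ge0 ?mulr_ge0 ?subr_ge0.
- by move=> i Pi; rewrite lyP ?lzP // !mulr0 addr0.
- by rewrite big_split /= -!mulr_sumr ly1 lz1 !mulr1 addrC subrK.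
- move=> e; rewrite hx hy hz !mulr_sumr -big_split /=; apply: eq_bigr => i _.
  ring.
Qed.

Lemma conv_comb_ge1 (lam F : I -> R) :
  (forall i, 0 <= lam i) -> (forall i, ~ P i -> lam i = 0) -> \sum_i lam i = 1 ->
  (forall i, P i -> 1 <= F i) -> 1 <= \sum_i lam i * F i.
Proof.
move=> lam0 lamP lam1 F1; rewrite -{1}lam1; apply: ler_sum => i _.
have [Pi|nPi] := classic (P i); first by rewrite -{1}(mulr1 (lam i)) ler_wpM2l ?F1.
by rewrite lamP // !mul0r.
Qed.

Lemma conv_comb_le1 (lam F : I -> R) :
  (forall i, 0 <= lam i) -> (forall i, ~ P i -> lam i = 0) -> \sum_i lam i = 1 ->
  (forall i, P i -> F i <= 1) -> \sum_i lam i * F i <= 1.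
Proof.
move=> lam0 lamP lam1 F1; rewrite -[X in _ <= X]lam1; apply: ler_sum => i _.
have [Pi|nPi] := classic (P i); first by rewrite -{2}(mulr1 (lam i)) ler_wpM2l ?F1.
by rewrite lamP // !mul0r.
Qed.

End ConvexHull.

Section StableMatchingPolytope.
Variables (R : realFieldType) (V E : finType) (side : V -> bool)
  (src dst : E -> V) (E1 : {set E}) (pref : V -> option E -> option E -> bool).
Hypothesis bip : bipartite_simple side src dst.
Hypothesis pref_wf : pref_ok src dst pref.

Local Notation inc := (incident src dst).
Local Notation sp := (spref pref).
Local Notation ip := (ipref pref).
Local Notation medge := (medge src dst).
Local Notation matching := (is_matching src dst).
Local Notation stable := (nu_stable src dst pref E1).
Local Notation hull :=
  (in_conv_hull (fun mu : {set E} => stable mu) (fun mu => chi R mu)).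

Lemma side_src e : side (src e) = false. Proof. by case: bip. Qed.
Lemma side_dst e : side (dst e) = true. Proof. by case: bip => _ []. Qed.

Lemma src_neq_dst e : src e != dst e.
Proof. by apply/eqP => se; move: (side_src e); rewrite se side_dst. Qed.

Lemma inc_src e : inc e (src e). Proof. by rewrite /incident eqxx. Qed.
Lemma inc_dst e : inc e (dst e). Proof. by rewrite /incident eqxx orbT. Qed.

Lemma inc_sideF f v : inc f v -> side v = false -> v = src f.
Proof. by case/orP => /eqP -> //; rewrite side_dst. Qed.

Lemma inc_sideT f v : inc f v -> side v = true -> v = dst f.
Proof. by case/orP => /eqP -> //; rewrite side_src. Qed.

Lemma sum_endpoints (F : V -> R) e : \sum_(v | inc e v) F v = F (src e) + F (dst e).
Proof.
rewrite (bigD1 (src e)) ?inc_src //= (bigD1 (dst e)) /=; last first.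
  by rewrite inc_dst eq_sym src_neq_dst.
rewrite big1 ?addr0 // => v /andP[/andP[]].
by case/orP => /eqP ->; rewrite eqxx.
Qed.

Lemma sum_incident (F : V -> E -> R) :
  \sum_v \sum_(e | inc e v) F v e = \sum_e (F (src e) e + F (dst e) e).
Proof.
rewrite (exchange_big_dep predT) //=; apply: eq_bigr => e _.
exact: (sum_endpoints (F^~ e)).
Qed.

(* Each edge has exactly one endpoint on each side. *)
Lemma sum_side (d : E -> R) b :
  \sum_(v | side v == b) \sum_(f | inc f v) d f = \sum_f d f.
Proof.
rewrite (exchange_big_dep predT) //=; apply: eq_bigr => f _.
rewrite (bigD1 (if b then dst f else src f)) /=; last first.
  by case: b; rewrite ?side_dst ?side_src ?inc_dst ?inc_src.
rewrite big1 ?addr0 // => v /andP[/andP[/eqP sv fv]].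
by case: b sv => sv; [rewrite -(inc_sideT fv sv)|rewrite -(inc_sideF fv sv)]; rewrite eqxx.
Qed.

Lemma pref_total v e f : inc e v -> inc f v ->
  pref v (Some e) (Some f) || pref v (Some f) (Some e).
Proof. by case: (pref_wf v) => tot _ ev fv; apply: tot. Qed.

Lemma pref_refl v e : inc e v -> pref v (Some e) (Some e).
Proof. by move=> ev; have := pref_total ev ev; rewrite orbb. Qed.

Lemma pref_trans v e f g : inc e v -> inc f v -> inc g v ->
  pref v (Some e) (Some f) -> pref v (Some f) (Some g) -> pref v (Some e) (Some g).
Proof. by case: (pref_wf v) => _ [tr _] ev fv gv; apply: tr. Qed.

Lemma pref_none v e : inc e v -> pref v (Some e) None.
Proof. by case: (pref_wf v) => _ [_ /(_ e) h] /h []. Qed.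

Lemma spref_none v e : inc e v -> sp v (Some e) None.
Proof. by case: (pref_wf v) => _ [_ /(_ e) h] /h [p np]; rewrite /spref p np. Qed.

Lemma spref_irr v a : ~~ sp v a a.
Proof. by rewrite /spref; case: (pref v a a). Qed.

Lemma spref_pref_trans v e f g : inc e v -> inc f v -> inc g v ->
  sp v (Some e) (Some f) -> pref v (Some f) (Some g) -> sp v (Some e) (Some g).
Proof.
move=> ev fv gv /andP[pef npfe] pfg; rewrite /spref (pref_trans ev fv gv pef pfg).
by apply: contra npfe => pge; apply: (pref_trans fv gv ev pfg pge).
Qed.

Lemma pref_spref_trans v e f g : inc e v -> inc f v -> inc g v ->
  pref v (Some e) (Some f) -> sp v (Some f) (Some g) -> sp v (Some e) (Some g).
Proof.
move=> ev fv gv pef /andP[pfg npgf]; rewrite /spref (pref_trans ev fv gv pef pfg).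
by apply: contra npgf => pge; apply: (pref_trans gv ev fv pge pef).
Qed.

Lemma spref_trans v e f g : inc e v -> inc f v -> inc g v ->
  sp v (Some e) (Some f) -> sp v (Some f) (Some g) -> sp v (Some e) (Some g).
Proof. by move=> ev fv gv sef /andP[pfg _]; apply: (spref_pref_trans ev fv gv sef pfg). Qed.

Lemma nspref_pref v e f : inc e v -> inc f v ->
  ~~ sp v (Some e) (Some f) -> pref v (Some f) (Some e).
Proof.
move=> ev fv; rewrite /spref negb_and negbK => /orP[] // npef.
by move: (pref_total ev fv); rewrite (negbTE npef).
Qed.

Lemma nspref_ipref v e f : inc e v -> inc f v ->
  ~~ sp v (Some e) (Some f) -> ~~ sp v (Some f) (Some e) -> ip v (Some e) (Some f).
Proof. by move=> ev fv nef nfe; rewrite /ipref (nspref_pref fv ev nfe) (nspref_pref ev fv nef). Qed.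

Lemma ipref_sym v a b : ip v a b = ip v b a.
Proof. by rewrite /ipref andbC. Qed.

Lemma ipref_trans v e f g : inc e v -> inc f v -> inc g v ->
  ip v (Some e) (Some f) -> ip v (Some f) (Some g) -> ip v (Some e) (Some g).
Proof.
move=> ev fv gv /andP[pef pfe] /andP[pfg pgf].
by rewrite /ipref (pref_trans ev fv gv pef pfg) (pref_trans gv fv ev pgf pfe).
Qed.

Lemma matching_uniq mu v g h : matching mu ->
  g \in mu -> inc g v -> h \in mu -> inc h v -> g = h.
Proof. by move=> /(_ v) /card_le1_eqP mu1 gm gv hm hv; apply: mu1; rewrite inE ?gm ?hm. Qed.

Lemma medge_some mu v g : medge mu v = Some g -> g \in mu /\ inc g v.
Proof. by rewrite /medge; case: pickP => // h /andP[hm hv] [<-]. Qed.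

Lemma medge_eq mu v g : matching mu -> g \in mu -> inc g v -> medge mu v = Some g.
Proof.
rewrite /medge => mum gm gv; case: pickP => [h /andP[hm hv]|none].
  by rewrite (matching_uniq mum hm hv gm gv).
by move: (none g); rewrite /= gm gv.
Qed.

Lemma chi_ge0 (mu : {set E}) f : 0 <= chi R mu f.
Proof. by rewrite /chi; case: ifP. Qed.

Lemma sum_chi_matching mu v (Q : pred E) : matching mu ->
  (exists m, [/\ m \in mu, inc m v & Q m] /\ \sum_(f | inc f v && Q f) chi R mu f = 1) \/
  \sum_(f | inc f v && Q f) chi R mu f = 0.
Proof.
move=> mum; case: (pickP (fun f => (f \in mu) && inc f v && Q f)) => [m|none].
  case/andP=> /andP[mm mv] Qm; left; exists m; split => //.
  rewrite (bigD1 m) ?mv ?Qm //= {1}/chi mm big1 ?addr0 // => f /andP[/andP[fv _] fm].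
  rewrite /chi; case: ifP => // fmu.
  by move: fm; rewrite (matching_uniq mum fmu fv mm mv) eqxx.
right; rewrite big1 // => f /andP[fv Qf]; rewrite /chi; case: ifP => // fm.
by move: (none f); rewrite fm fv Qf.
Qed.

Lemma sum_chi_ge1 (mu : {set E}) (P : pred E) g :
  g \in mu -> P g -> 1 <= \sum_(f | P f) chi R mu f.
Proof.
move=> gm Pg; rewrite (bigD1 g) //= {1}/chi gm lerDl.
by apply: sumr_ge0 => f _; apply: chi_ge0.
Qed.

(** * Vertex loads and the polytope S *)

(* [load x v], [above x v e], [tied x v e] are x(E(v)), x(E[>_v e]), x(E[~_v e]). *)
Definition load (x : E -> R) v := \sum_(f | inc f v) x f.
Definition above (x : E -> R) v e := \sum_(f | inc f v && sp v (Some f) (Some e)) x f.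
Definition tied (x : E -> R) v e := \sum_(f | inc f v && ip v (Some f) (Some e)) x f.
Definition below (x : E -> R) v e := \sum_(f | inc f v && sp v (Some e) (Some f)) x f.

Record in_S' (x : E -> R) : Prop := InS' {
  S'_ge0 : forall e, 0 <= x e;
  S'_load : forall v, load x v <= 1;
  S'_E1 : forall e, e \in E1 -> 1 <= x e + above x (src e) e + above x (dst e) e;
  S'_E2 : forall e v, e \notin E1 -> inc e v ->
    1 <= tied x v e + above x (src e) e + above x (dst e) e }.

Lemma in_SE x : in_S src dst pref E1 x <-> in_S' x.
Proof.
split => [[ge0 [ld [c1 c2]]]|[ge0 ld c1 c2]].
  split => //.
  - by move=> e eE; rewrite -addrA -(sum_endpoints (above x ^~ e)); apply: c1.
  - by move=> e v eE ev; rewrite -addrA -(sum_endpoints (above x ^~ e)); apply: c2.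
do 3 split => //.
- by move=> e eE; rewrite (sum_endpoints (above x ^~ e)) addrA; apply: c1.
- by move=> e v eE ev; rewrite (sum_endpoints (above x ^~ e)) addrA; apply: c2.
Qed.

Section Nonneg.
Variable x : E -> R.
Hypothesis x_ge0 : forall f, 0 <= x f.

Lemma load_ge0 v : 0 <= load x v. Proof. exact: sumr_ge0. Qed.
Lemma above_ge0 v e : 0 <= above x v e. Proof. exact: sumr_ge0. Qed.
Lemma tied_ge0 v e : 0 <= tied x v e. Proof. exact: sumr_ge0. Qed.
Lemma below_ge0 v e : 0 <= below x v e. Proof. exact: sumr_ge0. Qed.

Lemma le_tied v e : inc e v -> x e <= tied x v e.
Proof. by move=> ev; apply: (le_sum x_ge0); rewrite ev /ipref pref_refl. Qed.

Lemma le_load v e : inc e v -> x e <= load x v.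
Proof. exact: (le_sum x_ge0). Qed.

Lemma above_eq0 v e : (forall g, inc g v -> 0 < x g -> ~~ sp v (Some g) (Some e)) ->
  above x v e = 0.
Proof. by move=> h; apply: (psum_eq0 x_ge0) => g /andP[gv sge] /(h g gv); rewrite sge. Qed.

Lemma below_eq0 v e : (forall g, inc g v -> 0 < x g -> ~~ sp v (Some e) (Some g)) ->
  below x v e = 0.
Proof. by move=> h; apply: (psum_eq0 x_ge0) => g /andP[gv seg] /(h g gv); rewrite seg. Qed.

Lemma tied_eq0 v e : (forall g, inc g v -> 0 < x g -> ~~ ip v (Some g) (Some e)) ->
  tied x v e = 0.
Proof. by move=> h; apply: (psum_eq0 x_ge0) => g /andP[gv ige] /(h g gv); rewrite ige. Qed.

Lemma above_eq0_nspref v e g : above x v e = 0 -> inc g v -> 0 < x g ->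
  ~~ sp v (Some g) (Some e).
Proof.
by move=> a0 gv xg; apply/negP => sge; apply: (psum_eq0_pos x_ge0 a0 _ xg); rewrite gv sge.
Qed.

Lemma below_eq0_nspref v e g : below x v e = 0 -> inc g v -> 0 < x g ->
  ~~ sp v (Some e) (Some g).
Proof.
by move=> b0 gv xg; apply/negP => seg; apply: (psum_eq0_pos x_ge0 b0 _ xg); rewrite gv seg.
Qed.

Lemma tied_pair_ge v g h : inc g v -> inc h v -> g != h -> ip v (Some h) (Some g) ->
  x g + x h <= tied x v g.
Proof.
move=> gv hv gh ihg; rewrite /tied (bigD1 g) /=; last by rewrite gv /ipref pref_refl.
by rewrite lerD2l (le_sum x_ge0) // hv ihg eq_sym.
Qed.

Lemma tied_gt_exists v e : inc e v -> x e < tied x v e ->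
  exists g, [/\ inc g v, 0 < x g, g != e & ip v (Some g) (Some e)].
Proof.
move=> ev lt_e; apply: NNPP => none; move: lt_e.
rewrite /tied (bigD1 e) /=; last by rewrite ev /ipref pref_refl.
rewrite (psum_eq0 x_ge0) ?addr0 ?ltxx // => g /andP[/andP[gv ige] ge] xg.
by apply: none; exists g.
Qed.

Lemma load_pos_support v : 0 < load x v -> exists2 f, inc f v & 0 < x f.
Proof.
move=> lpos; apply: NNPP => nopos; move: lpos; rewrite /load (psum_eq0 x_ge0) ?ltxx //.
by move=> f fv xf; apply: nopos; exists f.
Qed.

Lemma exists_top v : 0 < load x v -> exists f, [/\ inc f v, 0 < x f & above x v f = 0].
Proof.
case/load_pos_support => f0 f0v xf0.
have [f /andP[fv xf] ftop] := @exists_minimal _ (fun g => inc g v && (0 < x g))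
  (fun g f => sp v (Some g) (Some f)) (fun g => spref_irr v (Some g))
  (fun a b c Pa Pb Pc => spref_trans (andP Pa).1 (andP Pb).1 (andP Pc).1)
  f0 (introT andP (conj f0v xf0)).
by exists f; split => //; apply: above_eq0 => g gv xg; apply: ftop; rewrite gv xg.
Qed.

Lemma exists_bottom v : 0 < load x v -> exists f, [/\ inc f v, 0 < x f & below x v f = 0].
Proof.
case/load_pos_support => f0 f0v xf0.
have [f /andP[fv xf] fbot] := @exists_minimal _ (fun g => inc g v && (0 < x g))
  (fun g f => sp v (Some f) (Some g)) (fun g => spref_irr v (Some g))
  (fun a b c Pa Pb Pc sba scb => spref_trans (andP Pc).1 (andP Pb).1 (andP Pa).1 scb sba)
  f0 (introT andP (conj f0v xf0)).
by exists f; split => //; apply: below_eq0 => g gv xg; apply: fbot; rewrite gv xg.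
Qed.

End Nonneg.

Lemma stable_dominated (mu : {set E}) e : e \notin mu -> ~ weakly_blocks src dst pref mu e ->
  exists v m, [/\ m \in mu, inc m v, inc e v & sp v (Some m) (Some e)].
Proof.
move=> emu nwb.
have [v [ev npe]] : exists v, inc e v /\ ~~ pref v (Some e) (medge mu v).
  apply: NNPP => nex; apply: nwb; split => // v ev.
  by apply: NNPP => npe; apply: nex; exists v; split => //; apply/negP.
case me: (medge mu v) npe => [m|]; last by rewrite pref_none.
move=> npe; case/medge_some: me => mm mv; exists v, m; split => //.
by rewrite /spref npe andbT; move: (pref_total ev mv); rewrite (negbTE npe).
Qed.

Lemma weakly_not_strongly_tied (mu : {set E}) e v : weakly_blocks src dst pref mu e ->
  ~ strongly_blocks src dst pref mu e -> inc e v ->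
  exists2 m, m \in mu & inc m v && ip v (Some m) (Some e).
Proof.
move=> [emu pe] nsb ev.
have nsp : ~~ sp v (Some e) (medge mu v).
  by apply/negP => s; apply: nsb; split; [split|exists v].
case me: (medge mu v) nsp (pe v ev) => [m|]; last by rewrite spref_none.
case/medge_some: me => mm mv nsp pem; exists m => //.
by rewrite mv /ipref pem (nspref_pref ev mv nsp).
Qed.

Lemma dominated_above_ge1 (mu : {set E}) e v m : m \in mu -> inc m v -> inc e v ->
  sp v (Some m) (Some e) -> 1 <= above (chi R mu) (src e) e + above (chi R mu) (dst e) e.
Proof.
move=> mm mv ev smv.
have ge1 : 1 <= above (chi R mu) v e by apply: sum_chi_ge1 mm _; rewrite mv smv.
have := above_ge0 (chi_ge0 mu) (src e) e; have := above_ge0 (chi_ge0 mu) (dst e) e.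
by case/orP: ev ge1 => /eqP ->; lra.
Qed.

Lemma load_chi_01 mu v : matching mu ->
  load (chi R mu) v = 0 \/ load (chi R mu) v = 1.
Proof.
move=> mum; have := sum_chi_matching v predT mum; rewrite /load.
by under eq_bigl do rewrite andbT; move=> [[m [_ ->]]|->]; [right|left].
Qed.

Lemma chi_in_S' mu : stable mu -> in_S' (chi R mu).
Proof.
case=> mum [noE1 noE2]; have chi0 := chi_ge0 mu.
have chi_mu e : e \in mu -> chi R mu e = 1 by rewrite /chi => ->.
split => //.
- by move=> v; case: (load_chi_01 v mum) => ->; rewrite ?ler01.
- move=> e eE; have := above_ge0 chi0 (src e) e; have := above_ge0 chi0 (dst e) e.
  have [emu|emu] := boolP (e \in mu); first by have := chi_mu e emu; lra.
  have [v [m [mm mv ev smv]]] := stable_dominated emu (noE1 e eE).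
  by have := dominated_above_ge1 mm mv ev smv; have := chi0 e; lra.
- move=> e v eE ev; have := above_ge0 chi0 (src e) e; have := above_ge0 chi0 (dst e) e.
  have := tied_ge0 chi0 v e.
  have [emu|emu] := boolP (e \in mu).
    have : 1 <= tied (chi R mu) v e by apply: sum_chi_ge1 emu _; rewrite ev /ipref pref_refl.
    lra.
  have [wb|nwb] := classic (weakly_blocks src dst pref mu e); last first.
    have [w [m [mm mw ew smw]]] := stable_dominated emu nwb.
    by have := dominated_above_ge1 mm mw ew smw; lra.
  have [m mm /andP[mv imv]] := weakly_not_strongly_tied wb (noE2 e eE) ev.
  have : 1 <= tied (chi R mu) v e by apply: sum_chi_ge1 mm _; rewrite mv imv.
  lra.
Qed.

Lemma hull_in_S' x : hull x -> in_S' x.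
Proof.
case=> lam [lam0 [lamP [lam1 xE]]].
have lin (Q : pred E) : \sum_(f | Q f) x f = \sum_i lam i * \sum_(f | Q f) chi R i f.
  by rewrite -sum_mulr_exchange; apply: eq_bigr => f _; rewrite xE.
split.
- by move=> e; rewrite xE; apply: sumr_ge0 => i _; rewrite mulr_ge0 ?chi_ge0.
- move=> v; rewrite /load lin.
  by apply: (conv_comb_le1 lam0 lamP lam1) => i /chi_in_S' [_ + _ _]; apply.
- move=> e eE.
  have -> : x e + above x (src e) e + above x (dst e) e = \sum_i lam i *
      (chi R i e + above (chi R i) (src e) e + above (chi R i) (dst e) e).
    by rewrite /above !lin xE -!big_split; apply: eq_bigr => i _; rewrite !mulrDr.
  by apply: (conv_comb_ge1 lam0 lamP lam1) => i /chi_in_S' [_ _ + _]; apply.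
- move=> e v eE ev.
  have -> : tied x v e + above x (src e) e + above x (dst e) e = \sum_i lam i *
      (tied (chi R i) v e + above (chi R i) (src e) e + above (chi R i) (dst e) e).
    by rewrite /tied /above !lin -!big_split; apply: eq_bigr => i _; rewrite !mulrDr.
  by apply: (conv_comb_ge1 lam0 lamP lam1) => i /chi_in_S' [_ _ _ +]; apply.
Qed.

(** * Tightness *)

Lemma load_split x v e : inc e v -> load x v = above x v e + tied x v e + below x v e.
Proof.
move=> ev; rewrite /load /above /tied /below !big_mkcondr -!big_split /=.
apply: eq_bigr => f fv; rewrite /spref /ipref.
case pfe: (pref v (Some f) (Some e)); case pef: (pref v (Some e) (Some f));
  rewrite /= ?addr0 ?add0r //.
by move: (pref_total fv ev); rewrite pfe pef.
Qed.

Lemma sum_above_below x v :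
  \sum_(e | inc e v) x e * above x v e = \sum_(e | inc e v) x e * below x v e.
Proof.
rewrite /above /below; under eq_bigr do rewrite mulr_sumr.
rewrite (exchange_big_dep (fun f => inc f v)) /=; last by move=> i j _ /andP[].
apply: eq_bigr => f fv; rewrite mulr_sumr.
by apply: eq_big => [e|e _]; rewrite ?fv // mulrC.
Qed.

(* Splitting [load^2] over ordered pairs of edges at [v]: pairs with the first edge
   strictly above and strictly below contribute equally, tied pairs once. *)
Lemma load_sqr x v :
  \sum_(e | inc e v) x e * (tied x v e / 2 + above x v e) = load x v ^+ 2 / 2.
Proof.
have sqr : load x v ^+ 2 = \sum_(e | inc e v) x e * (above x v e + tied x v e + below x v e).
  by rewrite expr2 {1}/load mulr_suml; apply: eq_bigr => e ev; rewrite -load_split.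
rewrite sqr; under [in RHS]eq_bigr do rewrite !mulrDr.
rewrite !big_split /= -sum_above_below.
under eq_bigr do rewrite mulrDr mulrA.
by rewrite big_split /= -mulr_suml; field.
Qed.

(* The mean of the two constraints (3) of [e]; it dominates (2) when [e \in E1]. *)
Definition excess x e :=
  (tied x (src e) e + tied x (dst e) e) / 2 + above x (src e) e + above x (dst e) e.

Lemma excess_identity x :
  \sum_e x e * (excess x e - 1) + \sum_v (load x v - load x v ^+ 2) / 2 = 0.
Proof.
have sum_excess : \sum_e x e * excess x e = \sum_v load x v ^+ 2 / 2.
  rewrite -(eq_bigr _ (fun v _ => load_sqr x v)) sum_incident.
  by apply: eq_bigr => e _; rewrite /excess; ring.
have sum_load : \sum_v load x v = \sum_e x e *+ 2.
  by rewrite (sum_incident (fun _ e => x e)); under eq_bigr do rewrite -mulr2n.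
under eq_bigr do rewrite mulrBr mulr1.
under [X in _ + X]eq_bigr do rewrite mulrBl.
by rewrite !sumrB sum_excess -!mulr_suml sum_load sumrMnl mulr2n; field.
Qed.

Section Tight.
Variable x : E -> R.
Hypothesis xS : in_S' x.

Let x_ge0 := S'_ge0 xS.

Lemma excess_ge1 e : 1 <= excess x e.
Proof.
rewrite /excess; have [eE|eE] := boolP (e \in E1).
  have := S'_E1 xS eE; have := le_tied x_ge0 (inc_src e); have := le_tied x_ge0 (inc_dst e).
  lra.
by have := S'_E2 xS eE (inc_src e); have := S'_E2 xS eE (inc_dst e); lra.
Qed.

Lemma excess_tight : (forall v, load x v = 0 \/ load x v = 1) /\
  (forall f, 0 < x f -> excess x f = 1).
Proof.
have ex_ge0 e : 0 <= x e * (excess x e - 1) by rewrite mulr_ge0 ?subr_ge0 ?excess_ge1.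
have ld_ge0 v : 0 <= (load x v - load x v ^+ 2) / 2.
  have l0 := load_ge0 x_ge0 v; have l1 := S'_load xS v.
  by rewrite divr_ge0 // subr_ge0 expr2 -{3}(mulr1 (load x v)) ler_wpM2l.
have := excess_identity x; set A := \sum_e _; set B := \sum_v _ => AB0.
have A_ge0 : 0 <= A by apply: sumr_ge0 => e _; apply: ex_ge0.
have B_ge0 : 0 <= B by apply: sumr_ge0 => v _; apply: ld_ge0.
have A0 : A = 0 by lra.
have B0 : B = 0 by lra.
split=> [v|f xf].
  have ld0 : (load x v - load x v ^+ 2) / 2 = 0.
    exact: (psumr_eq0P (fun v _ => ld_ge0 v) B0).
  have /eqP : load x v * (1 - load x v) = 0 by rewrite expr2 in ld0; nra.
  by rewrite mulf_eq0 subr_eq0 => /orP[] /eqP ->; [left|right].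
have /eqP : x f * (excess x f - 1) = 0 by exact: (psumr_eq0P (fun e _ => ex_ge0 e) A0).
by rewrite mulf_eq0 (gt_eqF xf) subr_eq0 => /eqP.
Qed.

Lemma load_pos1 v : 0 < load x v -> load x v = 1.
Proof. by case: excess_tight => /(_ v) [->|->]; rewrite ?ltxx. Qed.

Lemma tight_edge f : 0 < x f ->
  [/\ tied x (src f) f = tied x (dst f) f,
      tied x (src f) f + above x (src f) f + above x (dst f) f = 1 &
      f \in E1 -> tied x (src f) f = x f].
Proof.
move=> xf; have := (excess_tight.2 f xf); rewrite /excess => ex1.
have [fE|fE] := boolP (f \in E1).
  have := S'_E1 xS fE; have := le_tied x_ge0 (inc_src f); have := le_tied x_ge0 (inc_dst f).
  by split; lra.
by have := S'_E2 xS fE (inc_src f); have := S'_E2 xS fE (inc_dst f); split; lra.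
Qed.

Lemma tight_align f : 0 < x f ->
  tied x (src f) f = tied x (dst f) f /\ above x (src f) f = below x (dst f) f.
Proof.
move=> xf; have [tt row _] := tight_edge xf.
have := load_split x (inc_dst f); rewrite load_pos1; last first.
  exact: lt_le_trans xf (le_load x_ge0 (inc_dst f)).
by split; lra.
Qed.

End Tight.

(** * Top edges *)

Definition top_edges x := [set f | (0 < x f) && (above x (src f) f == 0)].

Section TopEdges.
Variable x : E -> R.
Hypothesis xS : in_S' x.

Let x_ge0 := S'_ge0 xS.
Local Notation H := (top_edges x).

Lemma top_edgesP f : f \in H ->
  [/\ 0 < x f, above x (src f) f = 0 & below x (dst f) f = 0].
Proof. by rewrite inE => /andP[xf /eqP a0]; split => //; rewrite -(tight_align xS xf).2. Qed.

Lemma top_edges_nspref_dst m v g : m \in H -> inc m v -> side v ->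
  inc g v -> 0 < x g -> ~~ sp v (Some m) (Some g).
Proof.
move=> /top_edgesP[_ _ bm] mv sv; rewrite -(inc_sideT mv sv) in bm.
exact: below_eq0_nspref.
Qed.

Lemma top_edges_nspref_src m v g : m \in H -> inc m v -> ~~ side v ->
  inc g v -> 0 < x g -> ~~ sp v (Some g) (Some m).
Proof.
move=> /top_edgesP[_ am _] mv /negbTE sv; rewrite -(inc_sideF mv sv) in am.
exact: above_eq0_nspref.
Qed.

Lemma top_edges_tied v g h : g \in H -> h \in H -> inc g v -> inc h v ->
  ip v (Some g) (Some h).
Proof.
move=> gH hH gv hv; have [xg _ _] := top_edgesP gH; have [xh _ _] := top_edgesP hH.
apply: nspref_ipref => //; case: (boolP (side v)) => sv.
  by rewrite (top_edges_nspref_dst gH gv sv hv xh).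
by rewrite (top_edges_nspref_src hH hv sv gv xg).
by rewrite (top_edges_nspref_dst hH hv sv gv xg).
by rewrite (top_edges_nspref_src gH gv sv hv xh).
Qed.

Lemma top_edge_cover v : 0 < load x v -> exists2 f, f \in H & inc f v.
Proof.
move=> lv; case: (boolP (side v)) => sv.
  have [f [fv xf bf]] := exists_bottom x_ge0 lv; exists f => //.
  by rewrite inE xf (tight_align xS xf).2 -(inc_sideT fv sv) bf /=.
have [f [fv xf af]] := exists_top x_ge0 lv; exists f => //.
by rewrite inE xf -(inc_sideF fv (negbTE sv)) af /=.
Qed.

(* [m] is the lowest-ranked positive edge at [dst e]: all positive weight there is above [e]. *)
Lemma above_dst_eq1 e m : m \in H -> inc m (dst e) -> sp (dst e) (Some m) (Some e) ->
  above x (dst e) e = 1.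
Proof.
move=> mH md sme; have [xm _ _] := top_edgesP mH.
have nsp := top_edges_nspref_dst mH md (side_dst e).
have t0 : tied x (dst e) e = 0.
  apply: tied_eq0 => // g gd xg; apply: contra (nsp g gd xg) => /andP[_ peg].
  exact: spref_pref_trans md (inc_dst e) gd sme peg.
have b0 : below x (dst e) e = 0.
  apply: below_eq0 => // g gd xg; apply: contra (nsp g gd xg).
  exact: spref_trans md (inc_dst e) gd sme.
have := load_split x (inc_dst e); rewrite load_pos1 // ?(lt_le_trans xm (le_load x_ge0 md)) //.
lra.
Qed.

Lemma tied_above_dst_eq1 e m : m \in H -> inc m (dst e) -> ip (dst e) (Some m) (Some e) ->
  tied x (dst e) e + above x (dst e) e = 1.
Proof.
move=> mH md /andP[pme _]; have [xm _ _] := top_edgesP mH.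
have nsp := top_edges_nspref_dst mH md (side_dst e).
have b0 : below x (dst e) e = 0.
  apply: below_eq0 => // g gd xg; apply: contra (nsp g gd xg).
  exact: pref_spref_trans md (inc_dst e) gd pme.
have := load_split x (inc_dst e); rewrite load_pos1 // ?(lt_le_trans xm (le_load x_ge0 md)) //.
lra.
Qed.

End TopEdges.

Section NoSlack.
Variable x : E -> R.
Hypothesis xS : in_S' x.
Hypothesis no_slack : forall f, f \in top_edges x -> x f = tied x (src f) f.

Let x_ge0 := S'_ge0 xS.
Local Notation H := (top_edges x).

Lemma top_tied_alone v m g : m \in H -> inc m v -> inc g v -> 0 < x g -> g != m ->
  ~~ ip v (Some g) (Some m).
Proof.
move=> mH mv gv xg gm; apply/negP => igm.
have [xm _ _] := top_edgesP xS mH.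
have tm : tied x v m = x m.
  by case/orP: mv => /eqP ->; rewrite -?(tight_align xS xm).1 -no_slack.
have mg : m != g by rewrite eq_sym.
by have := tied_pair_ge x_ge0 mv gv mg igm; lra.
Qed.

Lemma top_edges_matching : matching H.
Proof.
move=> v; apply/card_le1_eqP => g h.
rewrite inE => /andP[gH gv]; rewrite inE => /andP[hH hv].
have [//|gh] := eqVneq g h.
have [xh _ _] := top_edgesP xS hH; have hg : h != g by rewrite eq_sym.
by move: (top_tied_alone gH gv hv xh hg); rewrite (top_edges_tied xS hH gH hv gv).
Qed.

Lemma medge_top_edges v g : inc g v -> 0 < x g ->
  exists m, [/\ medge H v = Some m, m \in H & inc m v].
Proof.
move=> gv xg; have [m mH mv] := top_edge_cover xS (lt_le_trans xg (le_load x_ge0 gv)).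
by exists m; rewrite (medge_eq top_edges_matching mH mv).
Qed.

Lemma above_src_eq0 e : pref (src e) (Some e) (medge H (src e)) -> above x (src e) e = 0.
Proof.
move=> pem; apply: above_eq0 => // g gs xg; apply/negP => sge.
have [m [me mH ms]] := medge_top_edges gs xg; rewrite me in pem.
have := top_edges_nspref_src xS mH ms (negbT (side_src e)) gs xg.
by rewrite (spref_pref_trans gs (inc_src e) ms sge pem).
Qed.

Lemma tied_src_eq0 e : sp (src e) (Some e) (medge H (src e)) -> tied x (src e) e = 0.
Proof.
move=> sem; apply: tied_eq0 => // g gs xg; apply/negP => /andP[pge _].
have [m [me mH ms]] := medge_top_edges gs xg; rewrite me in sem.
have := top_edges_nspref_src xS mH ms (negbT (side_src e)) gs xg.
by rewrite (pref_spref_trans gs (inc_src e) ms pge sem).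
Qed.

Lemma weight_src_eq0 e : e \notin H -> pref (src e) (Some e) (medge H (src e)) -> x e = 0.
Proof.
move=> eH pem; apply/eqP; rewrite eq_le x_ge0 andbT leNgt; apply/negP => xe.
have [m [me mH ms]] := medge_top_edges (inc_src e) xe; rewrite me in pem.
have nsp := top_edges_nspref_src xS mH ms (negbT (side_src e)) (inc_src e) xe.
have em : e != m by apply: contraNneq eH => ->.
move/negP: (top_tied_alone mH ms (inc_src e) xe em).
by rewrite /ipref pem (nspref_pref (inc_src e) ms nsp).
Qed.

Lemma above_dst_lt1 e : pref (dst e) (Some e) (medge H (dst e)) -> above x (dst e) e < 1.
Proof.
move=> pem; have := load_split x (inc_dst e); have := S'_load xS (dst e).
have := tied_ge0 x_ge0 (dst e) e; have := below_ge0 x_ge0 (dst e) e.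
have [ld_pos|] := ltP 0 (load x (dst e)); last by lra.
have [m mH md] := top_edge_cover xS ld_pos; have [xm _ _] := top_edgesP xS mH.
rewrite (medge_eq top_edges_matching mH md) in pem.
have : x m <= tied x (dst e) e + below x (dst e) e.
  case pme: (pref (dst e) (Some m) (Some e)).
    by rewrite ler_wpDr ?below_ge0 // (le_sum x_ge0) // md /ipref pme pem.
  by rewrite ler_wpDl ?tied_ge0 // (le_sum x_ge0) // md /spref pem pme.
by rewrite (load_pos1 xS ld_pos); lra.
Qed.

Lemma tied_above_dst_lt1 e : sp (dst e) (Some e) (medge H (dst e)) ->
  tied x (dst e) e + above x (dst e) e < 1.
Proof.
move=> sem; have := load_split x (inc_dst e); have := S'_load xS (dst e).
have := below_ge0 x_ge0 (dst e) e.
have [ld_pos|] := ltP 0 (load x (dst e)); last by have := tied_ge0 x_ge0 (dst e) e; lra.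
have [m mH md] := top_edge_cover xS ld_pos; have [xm _ _] := top_edgesP xS mH.
rewrite (medge_eq top_edges_matching mH md) in sem.
have : x m <= below x (dst e) e by rewrite (le_sum x_ge0) // md sem.
by rewrite (load_pos1 xS ld_pos); lra.
Qed.

Lemma top_edges_stable : stable H.
Proof.
split; first exact: top_edges_matching.
split=> [e eE [eH pe]|e eE [[eH pe] [w [ew sew]]]].
  have := above_src_eq0 (pe _ (inc_src e)); have := weight_src_eq0 eH (pe _ (inc_src e)).
  by have := above_dst_lt1 (pe _ (inc_dst e)); have := S'_E1 xS eE; lra.
have := above_src_eq0 (pe _ (inc_src e)).
case/orP: ew => /eqP wE; rewrite wE in sew.
  have := tied_src_eq0 sew; have := above_dst_lt1 (pe _ (inc_dst e)).
  by have := S'_E2 xS eE (inc_src e); lra.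
by have := tied_above_dst_lt1 sew; have := S'_E2 xS eE (inc_dst e); lra.
Qed.

End NoSlack.

Lemma above_chi_01 mu v e : matching mu ->
  (exists m, [/\ m \in mu, inc m v & sp v (Some m) (Some e)]
     /\ above (chi R mu) v e = 1) \/ above (chi R mu) v e = 0.
Proof. exact: sum_chi_matching. Qed.

Lemma tied_chi_01 mu v e : matching mu ->
  (exists m, [/\ m \in mu, inc m v & ip v (Some m) (Some e)]
     /\ tied (chi R mu) v e = 1) \/ tied (chi R mu) v e = 0.
Proof. exact: sum_chi_matching. Qed.

Lemma tied_above_chi_le1 mu v e : matching mu -> inc e v ->
  tied (chi R mu) v e + above (chi R mu) v e <= 1.
Proof.
move=> mum ev; have := load_split (chi R mu) ev; have := below_ge0 (chi_ge0 mu) v e.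
by case: (load_chi_01 v mum) => ->; lra.
Qed.

Definition support (x : E -> R) := [set f | 0 < x f].

Definition peel (x : E -> R) (eps : R) f :=
  (x f - eps * chi R (top_edges x) f) / (1 - eps).

Section Peel.
Variable x : E -> R.
Hypothesis xS : in_S' x.
Hypothesis no_slack : forall f, f \in top_edges x -> x f = tied x (src f) f.
Variable eps : R.
Hypothesis eps_gt0 : 0 < eps.
Hypothesis eps_lt1 : eps < 1.
Hypothesis eps_le : forall f, f \in top_edges x -> eps <= x f.

Let x_ge0 := S'_ge0 xS.
Local Notation H := (top_edges x).
Local Notation c := (chi R H).
Local Notation x' := (peel x eps).

Lemma chi_top_le f : eps * c f <= x f.
Proof. by rewrite /chi; case: ifP => fH; rewrite ?mulr1 ?eps_le ?mulr0 ?x_ge0. Qed.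

Lemma sum_chi_top_le (P : pred E) : eps * \sum_(f | P f) c f <= \sum_(f | P f) x f.
Proof. by rewrite mulr_sumr; apply: ler_sum => f _; apply: chi_top_le. Qed.

Lemma above_chi_top_le v e : eps * above c v e <= above x v e.
Proof. exact: sum_chi_top_le. Qed.

Lemma tied_chi_top_le v e : eps * tied c v e <= tied x v e.
Proof. exact: sum_chi_top_le. Qed.

Lemma sum_peel (P : pred E) :
  \sum_(f | P f) x' f = (\sum_(f | P f) x f - eps * \sum_(f | P f) c f) / (1 - eps).
Proof. by rewrite -mulr_suml sumrB mulr_sumr. Qed.

Lemma peel_in_S' : in_S' x'.
Proof.
have d_gt0 : 0 < 1 - eps by rewrite subr_gt0.
have mH := top_edges_matching xS no_slack.
have cS := sum_chi_top_le.
split.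
- by move=> f; rewrite divr_ge0 ?subr_ge0 ?chi_top_le ?ltW.
- move=> v; rewrite /load sum_peel -!/(load _ v) ler_pdivrMr // mul1r.
  have := S'_load xS v; case: (load_chi_01 v mH) => lc; rewrite lc; last by lra.
  have [lx_pos|] := ltP 0 (load x v); last by have := load_ge0 x_ge0 v; lra.
  have [m mH' mv] := top_edge_cover xS lx_pos.
  by have := sum_chi_ge1 (P := inc ^~ v) mH' mv; rewrite -/(load c v) lc ler10.
- move=> e eE; rewrite /above !sum_peel /peel -!mulrDl ler_pdivlMr // mul1r.
  rewrite -!/(above _ _ _).
  have := S'_E1 xS eE; have := chi_top_le e; have := above_chi_top_le (src e) e.
  have := above_chi_top_le (dst e) e.
  case: (above_chi_01 (dst e) e mH) => [[m [[mH' md sme] ->]]|->].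
    by have := above_dst_eq1 xS mH' md sme; lra.
  have : c e + above c (src e) e <= 1.
    have := tied_above_chi_le1 mH (inc_src e); have := le_tied (chi_ge0 H) (inc_src e).
    lra.
  by move/(ler_wpM2l (ltW eps_gt0)); rewrite mulr1 mulrDr; lra.
- move=> e v eE ev; rewrite /tied /above !sum_peel -!mulrDl ler_pdivlMr // mul1r.
  rewrite -!/(above _ _ _) -!/(tied _ _ _).
  have := S'_E2 xS eE ev; have := tied_chi_top_le v e; have := above_chi_top_le (src e) e.
  have := above_chi_top_le (dst e) e.
  case: (above_chi_01 (dst e) e mH) => [[m [[mH' md sme] ->]]|->].
    by have := above_dst_eq1 xS mH' md sme; lra.
  have eps_tied_above (w : V) : tied c w e + above c (src e) e <= 1 ->
      eps * tied c w e + eps * above c (src e) e <= eps.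
    by move/(ler_wpM2l (ltW eps_gt0)); rewrite mulr1 mulrDr.
  case/orP: ev => /eqP ->.
    by have := eps_tied_above _ (tied_above_chi_le1 mH (inc_src e)); lra.
  case: (tied_chi_01 (dst e) e mH) => [[m0 [[m0H m0d im0] tc1]]|tc0]; last first.
    have := eps_tied_above (dst e); rewrite tc0 add0r.
    by have := tied_above_chi_le1 mH (inc_src e); have := tied_ge0 (chi_ge0 H) (src e) e; lra.
  case: (above_chi_01 (src e) e mH) => [[m [[mH' ms sme] ac1]]|ac0]; last first.
    by rewrite tc1 ac0; lra.
  have := tied_above_dst_eq1 xS m0H m0d im0; rewrite tc1 ac1.
  have : eps <= above x (src e) e.
    by rewrite (le_trans (eps_le mH')) // (le_sum x_ge0) // ms sme.
  lra.
Qed.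

Lemma peel_support_lt m : m \in H -> x m = eps -> (#|support x'| < #|support x|)%N.
Proof.
move=> mH xm; apply: proper_card; apply/properP; split.
  apply/subsetP => f; rewrite !inE => x'f; rewrite lt_def x_ge0 andbT.
  apply: contraTneq x'f => xf0; rewrite /peel xf0 /chi; case: ifP => [fH|_].
    by have [] := top_edgesP xS fH; rewrite xf0 ltxx.
  by rewrite mulr0 subr0 mul0r ltxx.
have [xm_pos _ _] := top_edgesP xS mH.
by exists m; rewrite !inE // /peel /chi mH mulr1 -xm subrr mul0r ltxx.
Qed.

End Peel.

(** * Slack edges *)

Lemma above_tie x v g f : inc g v -> inc f v -> ip v (Some g) (Some f) ->
  above x v g = above x v f.
Proof.
move=> gv fv /andP[pgf pfg]; apply: eq_bigl => h; case hv: (inc h v) => //=.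
apply/idP/idP => sh; first exact: (spref_pref_trans hv gv fv sh pgf).
exact: (spref_pref_trans hv fv gv sh pfg).
Qed.

Lemma below_tie x v g f : inc g v -> inc f v -> ip v (Some g) (Some f) ->
  below x v g = below x v f.
Proof.
move=> gv fv /andP[pgf pfg]; apply: eq_bigl => h; case hv: (inc h v) => //=.
apply/idP/idP => sh; first exact: (pref_spref_trans fv gv hv pfg sh).
exact: (pref_spref_trans gv fv hv pgf sh).
Qed.

Lemma tied_tie x v g f : inc g v -> inc f v -> ip v (Some g) (Some f) ->
  tied x v g = tied x v f.
Proof.
move=> gv fv igf; apply: eq_bigl => h; case hv: (inc h v) => //=.
apply/idP/idP => ih; first exact: (ipref_trans hv gv fv ih igf).
by apply: (ipref_trans hv fv gv ih); rewrite ipref_sym.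
Qed.

Definition slack_edges x := [set f in top_edges x | x f < tied x (src f) f].

Section SlackEdges.
Variable x : E -> R.
Hypothesis xS : in_S' x.

Let x_ge0 := S'_ge0 xS.
Local Notation H := (top_edges x).
Local Notation F := (slack_edges x).

Lemma slack_top f : f \in F -> f \in H.
Proof. by rewrite inE => /andP[]. Qed.

Lemma tied_at_endpoint f v : 0 < x f -> inc f v -> tied x v f = tied x (src f) f.
Proof. by move=> xf; case/orP => /eqP -> //; rewrite (tight_align xS xf).1. Qed.

Lemma slack_lt_tied f v : f \in F -> inc f v -> x f < tied x v f.
Proof.
move=> fF fv; have [xf _ _] := top_edgesP xS (slack_top fF).
by rewrite (tied_at_endpoint xf fv); move: fF; rewrite inE => /andP[].
Qed.

Lemma slack_notin_E1 f : f \in F -> f \notin E1.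
Proof.
move=> fF; have [xf _ _] := top_edgesP xS (slack_top fF).
have [_ _ tight_E1] := tight_edge xS xf; apply/negP => /tight_E1 tf.
by move: (slack_lt_tied fF (inc_src f)); rewrite tf ltxx.
Qed.

Lemma slack_closed f v g : f \in F -> inc f v -> inc g v -> 0 < x g ->
  ip v (Some g) (Some f) -> g \in F.
Proof.
move=> fF fv gv xg igf; have [xf af bf] := top_edgesP xS (slack_top fF).
have gH : g \in H.
  rewrite inE xg /=; case: (boolP (side v)) => sv.
    rewrite (tight_align xS xg).2 -(inc_sideT gv sv) (below_tie x gv fv igf).
    by rewrite (inc_sideT fv sv) bf.
  by rewrite -(inc_sideF gv (negbTE sv)) (above_tie x gv fv igf) (inc_sideF fv (negbTE sv)) af.
rewrite inE gH -(tied_at_endpoint xg gv) (tied_tie x gv fv igf) /=.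
have [->|gf] := eqVneq g f; first exact: slack_lt_tied fF fv.
have fg : f != g by rewrite eq_sym.
by apply: lt_le_trans (tied_pair_ge x_ge0 fv gv fg igf); rewrite ltrDr.
Qed.

Lemma slack_deg2 f v : f \in F -> inc f v -> exists g, [/\ g \in F, g != f & inc g v].
Proof.
move=> fF fv; have [g [gv xg gf igf]] := tied_gt_exists x_ge0 fv (slack_lt_tied fF fv).
by exists g; split => //; apply: slack_closed fF fv gv xg igf.
Qed.

End SlackEdges.

Lemma load_eq0_all (d : E -> R) u : (forall v, v != u -> load d v = 0) ->
  forall v, load d v = 0.
Proof.
move=> d0 v; have [->|] := eqVneq v u; last exact: d0.
have side_sum b : \sum_(w | side w == b) load d w = \sum_f d f by exact: sum_side.
have off b : b != side u -> \sum_(w | side w == b) load d w = 0.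
  move=> bu; apply: big1 => w /eqP sw; apply: d0.
  by apply: contra_neq bu => wu; rewrite -sw wu.
have := side_sum (side u); rewrite (bigD1 u) //= big1 ?addr0 => [->|w /andP[_ wu]].
  by rewrite -(side_sum (~~ side u)) off //; case: (side u).
exact: d0.
Qed.

Lemma card_touched_le (F : {set E}) :
  (forall f v, f \in F -> inc f v -> exists g, [/\ g \in F, g != f & inc g v]) ->
  (#|[set v | [exists f in F, inc f v]]| <= #|F|)%N.
Proof.
move=> deg2; set VF := [set v | _].
pose N v : R := \sum_(f | (f \in F) && inc f v) 1.
have sumN : \sum_v N v = #|F|%:R * 2.
  rewrite /N (exchange_big_dep (mem F)) /=; last by move=> v f _ /andP[].
  rewrite -sum1_card natr_sum mulr_suml; apply: eq_bigr => f fF.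
  by rewrite (eq_bigl (inc f)) => [|v]; rewrite ?sum_endpoints ?mul1r ?fF.
have N_ge2 v : v \in VF -> 2 <= N v.
  rewrite inE => /existsP[f /andP[fF fv]]; have [g [gF gf gv]] := deg2 f v fF fv.
  rewrite /N (bigD1 f) ?fF ?fv //= (bigD1 g) /= ?gF ?gv ?gf //.
  by rewrite addrA lerDl sumr_ge0.
have : #|VF|%:R * 2 <= #|F|%:R * 2 :> R.
  rewrite -sumN (bigID (mem VF)) /= -[X in X <= _]addr0 lerD //; last first.
    by apply: sumr_ge0 => v _; apply: sumr_ge0.
  by rewrite -sum1_card natr_sum mulr_suml; apply: ler_sum => v vV; rewrite mul1r N_ge2.
by rewrite ler_pM2r // ler_nat.
Qed.

(* The incidence rows of [F], restricted to the touched vertices but one, are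
   dependent; bipartiteness then forces the load at the omitted vertex to vanish. *)
Lemma zero_load_vector (F : {set E}) f0 : f0 \in F ->
  (forall f v, f \in F -> inc f v -> exists g, [/\ g \in F, g != f & inc g v]) ->
  exists d : E -> R,
    [/\ forall f, f \notin F -> d f = 0, exists f, d f != 0 & forall v, load d v = 0].
Proof.
move=> f0F deg2; set VF := [set v | [exists f in F, inc f v]].
have u_VF : src f0 \in VF by rewrite inE; apply/existsP; exists f0; rewrite f0F inc_src.
pose W := VF :\ src f0.
have ltWF : (#|W| < #|F|)%N by move: (card_touched_le deg2); rewrite (cardsD1 (src f0) VF) u_VF.
pose A : 'M[R]_(#|F|, #|W|) := \matrix_(i, j) (inc (enum_val i) (enum_val j))%:R.
have [r r0 rA] := left_kernel_nonzero A ltWF.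
pose d f := \sum_(i < #|F| | enum_val i == f) r 0 i.
have load_d v : load d v = \sum_(i < #|F| | inc (enum_val i) v) r 0 i.
  rewrite /load /d (exchange_big_dep (fun i : 'I_#|F| => inc (enum_val i) v)) /=;
    last by move=> f i fv /eqP ->.
  apply: eq_bigr => i iv; rewrite (big_pred1 (enum_val i)) // => f /=.
  by have [->|nf] := eqVneq f (enum_val i); rewrite ?iv ?andbF.
have d_supp f : f \notin F -> d f = 0.
  move=> fF; rewrite /d big1 // => i /eqP ei; move: (enum_valP i).
  by rewrite ei (negbTE fF).
exists d; split => //.
  have [i ri] : exists i, r 0 i != 0.
    apply: NNPP => none; case/negP: r0; apply/eqP/rowP => i; rewrite mxE.
    by apply: NNPP => ri; apply: none; exists i; apply/eqP.
  exists (enum_val i); rewrite /d (big_pred1 i) // => j /=.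
  by rewrite (inj_eq enum_val_inj).
apply: (@load_eq0_all d (src f0)) => v vu; have [vV|vV] := boolP (v \in VF).
  have vW : v \in W by rewrite /W in_setD1 vu vV.
  have rAv : (r *m A) 0 (enum_rank_in vW v) = 0 by rewrite rA mxE.
  rewrite load_d -[RHS]rAv !mxE big_mkcond /=; apply: eq_bigr => i _.
  by rewrite mxE (enum_rankK_in vW vW); case: (inc _ v); rewrite ?mulr1 ?mulr0.
rewrite /load big1 // => f fv; apply: d_supp; apply: contra vV => fF.
by rewrite inE; apply/existsP; exists f; rewrite fF fv.
Qed.

Section Perturb.
Variables x d : E -> R.
Hypothesis xS : in_S' x.
Hypothesis d_supp : forall f, f \notin slack_edges x -> d f = 0.
Hypothesis d_load : forall v, load d v = 0.

Local Notation F := (slack_edges x).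

Lemma sum_slack_const v (Q : pred E) :
  (forall g h, g \in F -> h \in F -> inc g v -> inc h v -> Q g -> Q h) ->
  \sum_(f | inc f v && Q f) d f = 0.
Proof.
move=> Qconst; case: (pickP (fun g => (g \in F) && inc g v && Q g)) => [g|none].
  case/andP=> /andP[gF gv] Qg; rewrite -[RHS](d_load v) /load big_mkcondr /=.
  apply: eq_bigr => f fv; case Qf: (Q f) => //; have [fF|fF] := boolP (f \in F).
    by move: (Qconst g f gF fF gv fv Qg); rewrite Qf.
  by rewrite d_supp.
rewrite big1 // => f /andP[fv Qf]; apply: d_supp; apply/negP => fF.
by move: (none f); rewrite fF fv Qf.
Qed.

Lemma slack_tied v g h : g \in F -> h \in F -> inc g v -> inc h v -> ip v (Some h) (Some g).
Proof. by move=> gF hF gv hv; exact: (top_edges_tied xS (slack_top hF) (slack_top gF) hv gv). Qed.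

Lemma above_dir_eq0 v e : inc e v -> above d v e = 0.
Proof.
move=> ev; apply: sum_slack_const => g h gF hF gv hv sge.
by have /andP[phg _] := slack_tied gF hF gv hv; apply: pref_spref_trans hv gv ev phg sge.
Qed.

Lemma tied_dir_eq0 v e : inc e v -> tied d v e = 0.
Proof.
move=> ev; apply: sum_slack_const => g h gF hF gv hv ige.
exact: ipref_trans hv gv ev (slack_tied gF hF gv hv) ige.
Qed.

Lemma sum_pert (t : R) (P : pred E) :
  \sum_(f | P f) (x f + t * d f) = \sum_(f | P f) x f + t * \sum_(f | P f) d f.
Proof. by rewrite big_split /= mulr_sumr. Qed.

Lemma pert_in_S' (t : R) : (forall f, 0 <= x f + t * d f) -> in_S' (fun f => x f + t * d f).
Proof.
move=> ge0; split => //.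
- move=> v; rewrite /load sum_pert -!/(load _ v) d_load mulr0 addr0.
  exact: S'_load.
- move=> e eE; rewrite /above !sum_pert -!/(above _ _ _).
  rewrite !above_dir_eq0 ?inc_src ?inc_dst // d_supp; last first.
    by apply/negP => /(slack_notin_E1 xS); rewrite eE.
  by rewrite !mulr0 !addr0; apply: S'_E1.
- move=> e v eE ev; rewrite /above /tied !sum_pert -!/(above _ _ _) -!/(tied _ _ _).
  rewrite !above_dir_eq0 ?inc_src ?inc_dst // tied_dir_eq0 //.
  by rewrite !mulr0 !addr0; apply: S'_E2.
Qed.

(* Move along [d] until the first weight with [d < 0] vanishes. *)
Lemma perturb_step g : d g < 0 -> exists2 t : R, 0 < t &
  (forall f, 0 <= x f + t * d f) /\
  (#|support (fun f => (x f + t * d f)%R)| < #|support x|)%N.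
Proof.
move=> dg; have [f1 df1 f1min] := @exists_minimal _ (fun f => d f < 0)
  (fun a b => x a / - d a < x b / - d b) (fun a => negbT (ltxx _))
  (fun a b c _ _ _ => @lt_trans _ _ _ _ _) g dg.
have f1F : f1 \in F by apply: contraT => /d_supp d0; move: df1; rewrite d0 ltxx.
have [xf1 _ _] := top_edgesP xS (slack_top f1F).
have nd1 : 0 < - d f1 by rewrite oppr_gt0.
exists (x f1 / - d f1); first by rewrite divr_gt0.
split.
  move=> f; have [df|df] := ltP (d f) 0; last first.
    by rewrite addr_ge0 ?(S'_ge0 xS) // mulr_ge0 // ltW ?divr_gt0.
  have ndf : 0 < - d f by rewrite oppr_gt0.
  have := f1min f df; rewrite -leNgt => le_ratio.
  by have := ler_wpM2r (ltW ndf) le_ratio; rewrite divfK ?gt_eqF // mulrN; lra.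
apply: proper_card; apply/properP; split.
  apply/subsetP => f; rewrite !inE => xdf; have [fF|fF] := boolP (f \in F).
    by have [] := top_edgesP xS (slack_top fF).
  by move: xdf; rewrite (d_supp fF) mulr0 addr0.
exists f1; rewrite !inE //.
suff -> : x f1 + x f1 / - d f1 * d f1 = 0 by rewrite ltxx.
by field; rewrite ?oppr_eq0 lt_eqF.
Qed.

End Perturb.

Section Decomposition.
Variable x : E -> R.
Hypothesis xS : in_S' x.
Hypothesis IH : forall y, in_S' y -> (#|support y| < #|support x|)%N -> hull y.

Let x_ge0 := S'_ge0 xS.
Local Notation H := (top_edges x).

(* [x] is a convex combination of [x + t1 d] and [x - t2 d]. *)
Lemma hull_of_slack f0 : f0 \in slack_edges x -> hull x.
Proof.
move=> f0F.
have [d [d_supp [f df] d_load]] := zero_load_vector f0F (fun f v fF fv => slack_deg2 xS fF fv).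
have sum_d : \sum_f d f = 0 by rewrite -(sum_side d false) big1 // => v _; apply: d_load.
have [g1 dg1] := sumr_eq0_neg sum_d (ex_intro _ f df).
have [g2 dg2] : exists g, - d g < 0.
  apply: (sumr_eq0_neg (d := fun f => - d f)); first by rewrite sumrN sum_d oppr0.
  by exists f; rewrite oppr_eq0.
have Nd_supp f' : f' \notin slack_edges x -> - d f' = 0 by move/d_supp ->; rewrite oppr0.
have Nd_load v : load (fun f => - d f) v = 0 by rewrite /load sumrN -/(load d v) d_load oppr0.
have [t1 t1_gt0 [ge1 lt1]] := perturb_step xS d_supp dg1.
have [t2 t2_gt0 [ge2 lt2]] := perturb_step xS Nd_supp dg2.
have hy := IH (pert_in_S' xS d_supp d_load ge1) lt1.
have hz := IH (pert_in_S' xS Nd_supp Nd_load ge2) lt2.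
have t_gt0 : 0 < t1 + t2 by rewrite addr_gt0.
apply: (in_conv_hull_comb (t := t2 / (t1 + t2)) _ hy hz) => [|e /=].
  by apply/andP; split; [rewrite divr_ge0 ?ltW|rewrite ler_pdivrMr // mul1r lerDr ltW].
by field; rewrite gt_eqF.
Qed.

Lemma top_weights1_eq_chi : (forall f, f \in H -> x f = 1) -> x = chi R H.
Proof.
move=> H1; apply: functional_extensionality => f; rewrite /chi; case: ifP => fH; first exact: H1.
apply/eqP; rewrite eq_le x_ge0 andbT leNgt; apply/negP => xf.
have [m mH ms] := top_edge_cover xS (lt_le_trans xf (le_load x_ge0 (inc_src f))).
have mf : f != m by apply: contraFneq fH => ->.
have : x m + x f <= load x (src f).
  rewrite /load (bigD1 m) //= (bigD1 f) /= ?inc_src ?mf //.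
  by rewrite addrA lerDl sumr_ge0.
by have := S'_load xS (src f); rewrite H1 //; lra.
Qed.

(* Peel off the stable matching [H] with the smallest weight it carries. *)
Lemma hull_of_no_slack : (forall f, f \in H -> x f = tied x (src f) f) -> hull x.
Proof.
move=> no_slack; have hull_H : hull (chi R H) by apply/in_conv_hull_pt/top_edges_stable.
have [f1 /andP[f1H xf1]|all1] := pickP (fun f => (f \in H) && (x f != 1)); last first.
  rewrite (top_weights1_eq_chi _) // => f fH; apply/eqP.
  by move: (all1 f); rewrite fH /= => /negbFE.
have [m mH mmin] := @exists_minimal _ (mem H) (fun a b => x a < x b)
  (fun a => negbT (ltxx _)) (fun a b c _ _ _ => @lt_trans _ _ _ _ _) f1 f1H.
have eps_le f : f \in H -> x m <= x f by move=> fH; rewrite leNgt mmin.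
have [eps_gt0 _ _] := top_edgesP xS mH.
have eps_lt1 : x m < 1.
  apply: le_lt_trans (eps_le f1 f1H) _; rewrite lt_neqAle xf1 /=.
  exact: le_trans (le_load x_ge0 (inc_src f1)) (S'_load xS _).
have hy := IH (peel_in_S' xS no_slack eps_gt0 eps_lt1 eps_le)
  (peel_support_lt xS mH erefl).
apply: (in_conv_hull_comb (t := x m) _ hull_H hy) => [|e].
  by rewrite !ltW.
by rewrite /peel; field; rewrite subr_eq0 gt_eqF.
Qed.

End Decomposition.

Lemma in_S'_hull x : in_S' x -> hull x.
Proof.
suff: forall n y, (#|support y| < n)%N -> in_S' y -> hull y by apply; apply: ltnSn.
elim=> [//|n IHn] y lt_yn yS.
have IH z : in_S' z -> (#|support z| < #|support y|)%N -> hull z.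
  by move=> zS lt_zy; apply: IHn zS; apply: leq_trans lt_zy lt_yn.
have [f0 f0F|no_slack] := pickP (fun f => f \in slack_edges y).
  exact (hull_of_slack yS IH f0F).
apply: (hull_of_no_slack yS IH) => f fH; have [xf _ _] := top_edgesP yS fH.
apply/eqP; rewrite eq_le (le_tied (S'_ge0 yS) (inc_src f)) /= leNgt.
by move: (no_slack f); rewrite inE fH => /negbT.
Qed.

End StableMatchingPolytope.

Theorem theorem4p1 (R : realFieldType) (V E : finType) (side : V -> bool)
  (src dst : E -> V) (E1 : {set E})
  (pref : V -> option E -> option E -> bool) :
  bipartite_simple side src dst ->
  pref_ok src dst pref ->
  forall x : E -> R,
    in_conv_hull (fun mu : {set E} => nu_stable src dst pref E1 mu)
      (fun mu => chi R mu) x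
    <-> in_S src dst pref E1 x.
Proof.
move=> bip pref_wf x; rewrite (in_SE E1 pref bip).
by split; [exact: (hull_in_S' pref_wf)|exact: (in_S'_hull bip pref_wf)].
Qed.
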